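(* There exist a single-item 2-bidder interdependent-values setting whose valuation profile is $c$-single-crossing for some constant $c\ge1$, and a signal profile $\mathbf s$, such that neither the second-price auction for interdependent values nor the generalized Vickrey auction admits a pure Nash equilibrium at $\mathbf s$ under the no-overbidding assumption.
   Context: Single-item interdependent-values setting: bidders have private signals $s_i\in S_i\subseteq\mathbb R_{\ge0}$ and publicly known valuations $v_i(\mathbf s)$, weakly increasing in every coordinate and strictly increasing in $s_i$. $c$-single-crossing ($c\ge1$): for all $i,i'$, $\mathbf s$, $\delta\ge0$, $c\,(v_i(s_i+\delta,\mathbf s_{-i})-v_i(\mathbf s))\ge v_{i'}(s_i+\delta,\mathbf s_{-i})-v_{i'}(\mathbf s)$. Both auctions solicit bids (reported signals) $\mathbf b$ and allocate the item to a bidder with highest $v_i(\mathbf b)$; losers pay nothing. Second-price auction: the winner pays the second-highest value $\max_{j\ne w}v_j(\mathbf b)$. Generalized Vickrey auction: the winner $w$ pays $v_w(b_w^*,\mathbf b_{-w})$, where the critical bid $b_w^*=\min\{b_w: x_w(b_w,\mathbf b_{-w})=1\}$. Utility $u_i(\mathbf b;\mathbf s)=x_i(\mathbf b)v_i(\mathbf s)-p_i(\mathbf b)$. A pure Nash equilibrium at $\mathbf s$ under no-overbidding is a bid profile $\mathbf b\le\mathbf s$ such that no bidder $i$ has $b_i'\le s_i$ with $u_i((b_i',\mathbf b_{-i});\mathbf s)>u_i(\mathbf b;\mathbf s)$. *)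

From HB Require Import structures.
From mathcomp Require Import all_boot all_order all_algebra.
From mathcomp Require Import boolp classical_sets reals.
Set Implicit Arguments. Unset Strict Implicit. Unset Printing Implicit Defensive.
Import Order.TTheory GRing.Theory Num.Theory.
Local Open Scope ring_scope.
Local Open Scope classical_set_scope.

(* S i : set R is the signal space of bidder i,
   v i : ('I_2 -> R) -> R is the (publicly known) valuation of bidder i. *)

Section Auctions.
Variable R : realType.

Definition profile := 'I_2 -> R.

Definition upd (b : profile) (i : 'I_2) (x : R) : profile :=
  fun j => if j == i then x else b j.

Definition other (i : 'I_2) : 'I_2 := if i == ord0 then ord_max else ord0.

Definition in_dom (S : 'I_2 -> set R) (s : profile) : Prop :=
  forall i, S i (s i).

Definition valid_setting (S : 'I_2 -> set R) (v : 'I_2 -> profile -> R) : Prop :=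
  [/\ (forall i x, S i x -> 0 <= x),
      (forall i, exists x, S i x),
      (forall i j (s : profile) x, in_dom S s -> S j x -> s j <= x ->
          v i s <= v i (upd s j x))
    & (forall i (s : profile) x, in_dom S s -> S i x -> s i < x ->
          v i s < v i (upd s i x))].

Definition single_crossing (S : 'I_2 -> set R) (v : 'I_2 -> profile -> R)
    (c : R) : Prop :=
  forall i i' (s : profile) (d : R), in_dom S s -> 0 <= d -> S i (s i + d) ->
    v i' (upd s i (s i + d)) - v i' s <= c * (v i (upd s i (s i + d)) - v i s).

Definition highest_value_alloc (S : 'I_2 -> set R) (v : 'I_2 -> profile -> R)
    (alloc : profile -> 'I_2) : Prop :=
  forall b, in_dom S b -> forall j, v j b <= v (alloc b) b.

(* payment of the winner w in the second-price auction:
   max_{j <> w} v_j(b), i.e. the value of the other bidder *)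
Definition spa_price (v : 'I_2 -> profile -> R) (b : profile) (w : 'I_2) : R :=
  v (other w) b.

(* critical bid of w: min { b_w in S_w : x_w(b_w, b_{-w}) = 1 }
   (taken as an infimum, which equals the minimum whenever it exists) *)
Definition crit_bid (S : 'I_2 -> set R) (alloc : profile -> 'I_2)
    (b : profile) (w : 'I_2) : R :=
  inf [set t | S w t /\ alloc (upd b w t) = w].

Definition gva_price (S : 'I_2 -> set R) (v : 'I_2 -> profile -> R)
    (alloc : profile -> 'I_2) (b : profile) (w : 'I_2) : R :=
  v w (upd b w (crit_bid S alloc b w)).

Definition utility (v : 'I_2 -> profile -> R) (alloc : profile -> 'I_2)
    (price : profile -> 'I_2 -> R) (i : 'I_2) (b s : profile) : R :=
  if alloc b == i then v i s - price b i else 0.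

Definition PNE_no_overbid (S : 'I_2 -> set R) (v : 'I_2 -> profile -> R)
    (alloc : profile -> 'I_2) (price : profile -> 'I_2 -> R) (s : profile) : Prop :=
  exists b : profile,
    [/\ in_dom S b, (forall i, b i <= s i) &
        forall i t, S i t -> t <= s i ->
          utility v alloc price i (upd b i t) s <= utility v alloc price i b s].

End Auctions.

From mathcomp Require Import all_boot all_order all_algebra.
From mathcomp Require Import boolp classical_sets reals.

Set Implicit Arguments.
Unset Strict Implicit.
Unset Printing Implicit Defensive.
Import Order.TTheory GRing.Theory Num.Theory.
Local Open Scope ring_scope.
Local Open Scope classical_set_scope.

(* A finite example suffices: both signals range over {0, 1, 2} and the
   valuations are given by two integer tables that are monotone and
   4-single-crossing.  The tables never tie, so every highest-value allocation
   rule picks the same winner on the 3 x 3 grid, and critical bids lie on the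
   grid as well; hence at s = (2, 2) both auctions are finite games whose
   payoffs can be read off the tables.  In each of their nine bid profiles
   some bidder has a profitable deviation to a bid at most her signal, which
   is checked by evaluation. *)

Definition gprofile := ('I_3 * 'I_3)%type.

(* Explicit enumerations: [enum 'I_n] does not reduce under [vm_compute]. *)
Definition bidders : seq 'I_2 := [:: ord0; ord_max].
Definition signals3 : seq 'I_3 :=
  [:: @Ordinal 3 0 isT; @Ordinal 3 1 isT; @Ordinal 3 2 isT].
Definition gprofiles : seq gprofile := [seq (x, y) | x <- signals3, y <- signals3].

Lemma bidderP (i : 'I_2) : i = ord0 \/ i = ord_max.
Proof. by case: i => [[|[|//]] ?]; [left | right]; apply: val_inj. Qed.

Lemma mem_bidders i : i \in bidders.
Proof. by case: (bidderP i) => ->. Qed.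

Lemma mem_signals3 k : k \in signals3.
Proof. by case: k => [[|[|[|//]]] ?]. Qed.

Lemma mem_gprofiles p : p \in gprofiles.
Proof. by case: p => x y; apply: allpairs_f; apply: mem_signals3. Qed.

Lemma allT (T : eqType) (s : seq T) (P : pred T) :
  (forall x, x \in s) -> forall x, all P s -> P x.
Proof. by move=> hs x /allP; apply. Qed.

Definition gsig (p : gprofile) (j : 'I_2) : 'I_3 := if j == ord0 then p.1 else p.2.

Definition gupd (p : gprofile) (i : 'I_2) (k : 'I_3) : gprofile :=
  if i == ord0 then (k, p.2) else (p.1, k).

Lemma gsig_gupd p i k j : gsig (gupd p i k) j = if j == i then k else gsig p j.
Proof. by case: (bidderP i) => ->; case: (bidderP j) => ->. Qed.

Lemma gupd_gsig p i : gupd p i (gsig p i) = p.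
Proof. by case: p => x y; case: (bidderP i) => ->. Qed.

(* Row = signal of bidder 0, column = signal of bidder 1. *)
Definition value_table (i : 'I_2) : seq (seq int) :=
  if i == ord0 then [:: [:: 1; 1; 4]; [:: 2; 3; 6]; [:: 3; 11; 12]]
  else [:: [:: 0; 2; 3]; [:: 3; 6; 9]; [:: 5; 7; 10]].

Definition gvalue (i : 'I_2) (p : gprofile) : int :=
  nth 0 (nth [::] (value_table i) p.1) p.2.

Fact gvalue_monotone :
  all (fun i => all (fun j => all (fun p => all (fun k : 'I_3 =>
    (gsig p j <= k)%N ==> (gvalue i p <= gvalue i (gupd p j k))
  ) signals3) gprofiles) bidders) bidders.
Proof. by vm_compute. Qed.

Fact gvalue_strictly_monotone_own :
  all (fun i => all (fun p => all (fun k : 'I_3 =>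
    (gsig p i < k)%N ==> (gvalue i p < gvalue i (gupd p i k))
  ) signals3) gprofiles) bidders.
Proof. by vm_compute. Qed.

Fact gvalue_single_crossing :
  all (fun i => all (fun i' => all (fun p => all (fun k : 'I_3 =>
    (gsig p i <= k)%N ==>
    (gvalue i' (gupd p i k) - gvalue i' p <= 4 * (gvalue i (gupd p i k) - gvalue i p))
  ) signals3) gprofiles) bidders) bidders.
Proof. by vm_compute. Qed.

Fact gvalue_no_tie : all (fun p => gvalue ord0 p != gvalue ord_max p) gprofiles.
Proof. by vm_compute. Qed.

Definition gwinner (p : gprofile) : 'I_2 :=
  if gvalue ord_max p < gvalue ord0 p then ord0 else ord_max.

(* As [signals3] is increasing, this is the least bid with which [w] wins;
   the default [gsig p w] is only reached when [w] does not win at [p]. *)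
Definition gcrit (p : gprofile) (w : 'I_2) : 'I_3 :=
  head (gsig p w) [seq k <- signals3 | gwinner (gupd p w k) == w].

Lemma gcrit_wins p w : gwinner p = w -> gwinner (gupd p w (gcrit p w)) = w.
Proof.
move=> hw; have : gsig p w \in [seq k <- signals3 | gwinner (gupd p w k) == w].
  by rewrite mem_filter gupd_gsig hw eqxx mem_signals3.
have := filter_all (fun k => gwinner (gupd p w k) == w) signals3.
by rewrite /gcrit; case: [seq k <- _ | _] => //= k ks /andP[/eqP].
Qed.

Lemma gcrit_le p w k : gwinner (gupd p w k) = w -> (gcrit p w <= k)%N.
Proof.
move=> hk; set le3 := fun a b : 'I_3 => (a <= b)%N.
have le3_trans : transitive le3 by move=> ? ? ?; apply: leq_trans.
have : k \in [seq k <- signals3 | gwinner (gupd p w k) == w].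
  by rewrite mem_filter hk eqxx mem_signals3.
have : sorted le3 [seq k <- signals3 | gwinner (gupd p w k) == w].
  exact: (sorted_filter le3_trans _ (isT : sorted le3 signals3)).
rewrite /gcrit; case: [seq k <- _ | _] => //= k0 ks.
by rewrite (path_sortedE le3_trans) inE => /andP[/allP hks _] /predU1P[-> //|/hks].
Qed.

Definition gspa_price (p : gprofile) (w : 'I_2) : int := gvalue (other w) p.

Definition ggva_price (p : gprofile) (w : 'I_2) : int := gvalue w (gupd p w (gcrit p w)).

Definition gutility (price : gprofile -> 'I_2 -> int) (i : 'I_2) (p s : gprofile) : int :=
  if gwinner p == i then gvalue i s - price p i else 0.

Definition has_profitable_underbid (price : gprofile -> 'I_2 -> int) (s p : gprofile) : bool :=
  has (fun i => has (fun k : 'I_3 => (k <= gsig s i)%N &&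
    (gutility price i p s < gutility price i (gupd p i k) s)) signals3) bidders.

Definition gtruthful : gprofile := (ord_max, ord_max).

Fact spa_has_profitable_underbid :
  all (has_profitable_underbid gspa_price gtruthful) gprofiles.
Proof. by vm_compute. Qed.

Fact gva_has_profitable_underbid :
  all (has_profitable_underbid ggva_price gtruthful) gprofiles.
Proof. by vm_compute. Qed.

Section GridSetting.
Variable R : realType.

Lemma inf_eq_min (A : set R) m : A m -> (forall t, A t -> m <= t) -> inf A = m.
Proof.
move=> Am mlb; apply/le_anti/andP; split.
- by apply: ge_inf => //; exists m.
- by apply: lb_le_inf => //; exists m.
Qed.

Definition grid_signals : 'I_2 -> set R := fun=> range (fun k : 'I_3 => k%:R).

Definition to_profile (p : gprofile) : profile R := fun j => (gsig p j)%:R.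

(* Off the grid [decode] returns the junk index [ord0]; the auction
   definitions only ever evaluate valuations on [in_dom grid_signals]. *)
Definition decode (r : R) : 'I_3 := odflt ord0 [pick k : 'I_3 | k%:R == r].

Definition of_profile (b : profile R) : gprofile := (decode (b ord0), decode (b ord_max)).

Definition grid_value (i : 'I_2) (b : profile R) : R := (gvalue i (of_profile b))%:~R.

Lemma decodeK (k : 'I_3) : decode k%:R = k.
Proof.
rewrite /decode; case: pickP => [k' | /(_ k)]; last by rewrite eqxx.
by rewrite eqr_nat => /eqP/val_inj.
Qed.

Lemma of_to_profile p : of_profile (to_profile p) = p.
Proof. by case: p => x y; rewrite /of_profile /to_profile /= !decodeK. Qed.

Lemma to_of_profile b : in_dom grid_signals b -> to_profile (of_profile b) = b.
Proof.
move=> hb; apply/funext => j; rewrite /to_profile /of_profile.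
by case: (bidderP j) (hb j) => -> [k _ <-]; rewrite /= decodeK.
Qed.

Lemma in_dom_to_profile p : in_dom grid_signals (to_profile p).
Proof. by move=> j; exists (gsig p j). Qed.

Lemma upd_to_profile p i (k : 'I_3) : upd (to_profile p) i k%:R = to_profile (gupd p i k).
Proof. by apply/funext => j; rewrite /upd /to_profile gsig_gupd; case: eqP. Qed.

Lemma grid_value_to_profile i p : grid_value i (to_profile p) = (gvalue i p)%:~R.
Proof. by rewrite /grid_value of_to_profile. Qed.

Lemma grid_valid_setting : valid_setting grid_signals grid_value.
Proof.
split.
- by move=> _ _ [k _ <-]; apply: ler0n.
- by move=> i; exists (ord0 : 'I_3)%:R, ord0.
- move=> i j b _ /to_of_profile <- [k _ <-].
  rewrite upd_to_profile !grid_value_to_profile ler_int /to_profile ler_nat.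
  apply/implyP; move: gvalue_monotone.
  by move=> /(allT mem_bidders i) /(allT mem_bidders j)
             /(allT mem_gprofiles _) /(allT mem_signals3 k).
- move=> i b _ /to_of_profile <- [k _ <-].
  rewrite upd_to_profile !grid_value_to_profile ltr_int /to_profile ltr_nat.
  apply/implyP; move: gvalue_strictly_monotone_own.
  by move=> /(allT mem_bidders i) /(allT mem_gprofiles _) /(allT mem_signals3 k).
Qed.

Lemma grid_single_crossing : single_crossing grid_signals grid_value 4.
Proof.
move=> i i' b d /to_of_profile <- d_ge0 [k _ ek].
have : (gsig (of_profile b) i)%:R <= k%:R :> R by rewrite ek lerDl.
rewrite -ek upd_to_profile !grid_value_to_profile -!intrB.
rewrite -[4 : R]/((4 : int)%:~R) -intrM ler_int ler_nat.
apply/implyP; move: gvalue_single_crossing.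
by move=> /(allT mem_bidders i) /(allT mem_bidders i')
           /(allT mem_gprofiles _) /(allT mem_signals3 k).
Qed.

Variable alloc : profile R -> 'I_2.
Hypothesis alloc_highest : highest_value_alloc grid_signals grid_value alloc.

Lemma alloc_to_profile p : alloc (to_profile p) = gwinner p.
Proof.
have hne := allT mem_gprofiles p gvalue_no_tie.
have hmax := alloc_highest (in_dom_to_profile p).
rewrite /gwinner; case: (bidderP (alloc (to_profile p))) => ha.
- have := hmax ord_max; rewrite ha !grid_value_to_profile ler_int => hle.
  by rewrite lt_neqAle hle eq_sym hne.
- have := hmax ord0; rewrite ha !grid_value_to_profile ler_int => hle.
  by rewrite ltNge hle.
Qed.

Lemma crit_bid_to_profile p :
  crit_bid grid_signals alloc (to_profile p) (gwinner p) = (gcrit p (gwinner p))%:R.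
Proof.
apply: inf_eq_min.
- split; first by exists (gcrit p (gwinner p)).
  by rewrite upd_to_profile alloc_to_profile gcrit_wins.
- move=> _ [[k _ <-]]; rewrite upd_to_profile alloc_to_profile => /gcrit_le.
  by rewrite ler_nat.
Qed.

Lemma spa_price_to_profile p :
  spa_price grid_value (to_profile p) (gwinner p) = (gspa_price p (gwinner p))%:~R.
Proof. by rewrite /spa_price grid_value_to_profile. Qed.

Lemma gva_price_to_profile p :
  gva_price grid_signals grid_value alloc (to_profile p) (gwinner p) =
  (ggva_price p (gwinner p))%:~R.
Proof. by rewrite /gva_price crit_bid_to_profile upd_to_profile grid_value_to_profile. Qed.

Section Payments.
Variables (price : profile R -> 'I_2 -> R) (gprice : gprofile -> 'I_2 -> int).
Hypothesis price_to_profile :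
  forall p, price (to_profile p) (gwinner p) = (gprice p (gwinner p))%:~R.

Lemma utility_to_profile i p s :
  utility grid_value alloc price i (to_profile p) (to_profile s) =
  (gutility gprice i p s)%:~R.
Proof.
rewrite /utility /gutility alloc_to_profile.
by case: eqP => [<-|_]; rewrite ?grid_value_to_profile ?price_to_profile ?intrB.
Qed.

Lemma not_PNE_of_profitable_underbid s :
  all (has_profitable_underbid gprice s) gprofiles ->
  ~ PNE_no_overbid grid_signals grid_value alloc price (to_profile s).
Proof.
move=> /allP hdev [b [/to_of_profile eb _ hnash]].
have /hasP[i _ /hasP[k _ /andP[hks hlt]]] := hdev (of_profile b) (mem_gprofiles _).
have hSk : grid_signals i k%:R by exists k.
have hks' : k%:R <= to_profile s i by rewrite ler_nat.
have := hnash i k%:R hSk hks'.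
by rewrite -eb upd_to_profile !utility_to_profile ler_int leNgt hlt.
Qed.

End Payments.
End GridSetting.

Theorem mainTheorem4 (R : realType) :
  exists (S : 'I_2 -> set R) (v : 'I_2 -> profile R -> R) (c : R) (s : profile R),
    [/\ 1 <= c, valid_setting S v, single_crossing S v c, in_dom S s &
        forall alloc : profile R -> 'I_2, highest_value_alloc S v alloc ->
          ~ PNE_no_overbid S v alloc (spa_price v) s /\
          ~ PNE_no_overbid S v alloc (gva_price S v alloc) s].
Proof.
exists (@grid_signals R), (@grid_value R), 4, (to_profile R gtruthful).
split; first by rewrite ler1n.
- exact: grid_valid_setting.
- exact: grid_single_crossing.
- exact: in_dom_to_profile.
move=> alloc alloc_highest; split; apply: (not_PNE_of_profitable_underbid alloc_highest).
- exact: spa_price_to_profile.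
- exact: spa_has_profitable_underbid.
- exact: gva_price_to_profile.
- exact: gva_has_profitable_underbid.
Qed.
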